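(* Let $m,d,n\ge1$, $p,q,\lambda>0$, $g(\alpha)=\|\alpha/\lambda\|_p^q$, and let $\mathfrak{D}$ be the set of matrices $D\in\mathbb{R}^{m\times d}$ whose columns all have unit $\ell_2$-norm. For any $X=[x_1,\dots,x_n]\in\mathbb{R}^{m\times n}$ define $$F_X(D)=\frac1n\sum_{i=1}^n\inf_{\alpha\in\mathbb{R}^d}\Big(\tfrac12\|x_i-D\alpha\|_2^2+g(\alpha)\Big),\qquad L_X=\frac1n\sum_{i=1}^n\|x_i\|_2\cdot\lambda\cdot d^{(1-1/p)_+}\Big(\tfrac12\|x_i\|_2^2\Big)^{1/q}.$$ Then for any $X$ and any $D,D'\in\mathfrak{D}$, $$|F_X(D')-F_X(D)|\le L_X\,\|D'-D\|_{1\to2}.$$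
   Context: $(t)_+=\max\{t,0\}$. For a matrix $M$ with columns $m_i$, $\|M\|_{1\to2}=\max_i\|m_i\|_2$. For $0<p<1$, $\|\cdot\|_p$ is the $\ell_p$ quasi-norm. *)

From HB Require Import structures.
From mathcomp Require Import all_boot all_order all_algebra.
From mathcomp Require Import all_classical all_reals all_analysis.
Set Implicit Arguments. Unset Strict Implicit. Unset Printing Implicit Defensive.
Import Order.TTheory GRing.Theory Num.Theory.
Local Open Scope ring_scope.
Local Open Scope classical_set_scope.

Definition norm2 (R : realType) (k : nat) (v : 'cV[R]_k) : R :=
  Num.sqrt (\sum_(i < k) v i 0 ^+ 2).

Definition lpnorm (R : realType) (k : nat) (p : R) (v : 'cV[R]_k) : R :=
  (\sum_(i < k) `|v i 0| `^ p) `^ p^-1.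

Definition greg (R : realType) (d : nat) (p q lam : R) (a : 'cV[R]_d) : R :=
  (lpnorm p (lam^-1 *: a)) `^ q.

(* ||M||_{1->2} = max column l2 norm *)
Definition norm12 (R : realType) (m d : nat) (M : 'M[R]_(m, d)) : R :=
  \big[Num.max/0]_(j < d) norm2 (col j M).

Definition unit_cols (R : realType) (m d : nat) (D : 'M[R]_(m, d)) : Prop :=
  forall j : 'I_d, norm2 (col j D) = 1.

Definition FX (R : realType) (m d n : nat) (p q lam : R)
    (X : 'M[R]_(m, n)) (D : 'M[R]_(m, d)) : R :=
  n%:R^-1 * \sum_(i < n)
    inf [set (2^-1 * norm2 (col i X - D *m a) ^+ 2 + greg p q lam a)
        | a in [set: 'cV[R]_d]].

Definition LX (R : realType) (m n : nat) (d : nat) (p q lam : R)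
    (X : 'M[R]_(m, n)) : R :=
  n%:R^-1 * \sum_(i < n)
    (norm2 (col i X) * lam * (d%:R `^ Num.max (1 - p^-1) 0)
       * ((2^-1 * norm2 (col i X) ^+ 2) `^ q^-1)).

From HB Require Import structures.
From mathcomp Require Import all_boot all_order all_algebra.
From mathcomp Require Import all_classical all_reals all_analysis.
From mathcomp Require Import lra ring.
Import Order.TTheory GRing.Theory Num.Theory.
Set Implicit Arguments. Unset Strict Implicit.
Local Open Scope ring_scope.

(* Fix a column x and put c := lambda d^((1-1/p)_+) (|x|^2/2)^(1/q).  Only
   codes alpha with objective at most its value |x|^2/2 at alpha = 0 matter
   for the infimum; for them g(alpha) <= |x|^2/2, hence |alpha|_1 <= c by the
   comparison of l1 and lp norms, and the residual |x - D alpha| is at most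
   |x|.  Evaluating the objective for D' at the same alpha then gives
   f(D') - f(D) <= |x| c delta + c^2 delta^2 / 2 with delta = |D' - D|_{1->2},
   without the infimum having to be attained.  Subdividing the segment
   [D, D'] into k pieces divides the quadratic remainder by k, so it vanishes
   and the Lipschitz bound remains. *)

Section EuclideanNorm.
Variables (R : realType) (k : nat).
Implicit Types u v : 'cV[R]_k.

Lemma norm2_ge0 v : 0 <= norm2 v.
Proof. exact: sqrtr_ge0. Qed.

Lemma norm2_sqr v : norm2 v ^+ 2 = \sum_(i < k) v i 0 ^+ 2.
Proof. by rewrite sqr_sqrtr // sumr_ge0 // => i _; exact: sqr_ge0. Qed.

Lemma norm2_eq0 v i : norm2 v = 0 -> v i 0 = 0.
Proof.
move=> v0; have : \sum_(i < k) v i 0 ^+ 2 = 0 by rewrite -norm2_sqr v0 expr0n.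
move/(psumr_eq0P (fun i _ => sqr_ge0 (v i 0)))/(_ i isT)/eqP.
by rewrite sqrf_eq0 => /eqP.
Qed.

Lemma norm2_0 : norm2 (0 : 'cV[R]_k) = 0.
Proof. by rewrite /norm2 big1 ?sqrtr0 // => i _; rewrite mxE expr0n. Qed.

Lemma sum_mul_le_norm2 u v : \sum_(i < k) u i 0 * v i 0 <= norm2 u * norm2 v.
Proof.
have [u0|u0] := eqVneq (norm2 u) 0.
  by rewrite u0 mul0r big1 // => i _; rewrite (norm2_eq0 i u0) mul0r.
have [v0|v0] := eqVneq (norm2 v) 0.
  by rewrite v0 mulr0 big1 // => i _; rewrite (norm2_eq0 i v0) mulr0.
have a0 : 0 < norm2 u by rewrite lt0r u0 norm2_ge0.
have b0 : 0 < norm2 v by rewrite lt0r v0 norm2_ge0.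
set a := norm2 u in a0 *; set b := norm2 v in b0 *.
rewrite -(@ler_pM2l _ (2 * a * b)) ?mulr_gt0 // mulr_sumr.
(* expand [0 <= sum_i (b u_i - a v_i)^2] *)
apply: (@le_trans _ _ (\sum_(i < k) (b ^+ 2 * u i 0 ^+ 2 + a ^+ 2 * v i 0 ^+ 2))).
  by apply: ler_sum => i _; have := sqr_ge0 (b * u i 0 - a * v i 0); nra.
by rewrite big_split /= -!mulr_sumr -!norm2_sqr -/a -/b; lra.
Qed.

Lemma norm2D u v : norm2 (u + v) <= norm2 u + norm2 v.
Proof.
rewrite -(@ler_pXn2r _ 2) ?nnegrE ?addr_ge0 ?norm2_ge0 // norm2_sqr.
have -> : \sum_(i < k) (u + v) i 0 ^+ 2 = \sum_(i < k) u i 0 ^+ 2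
    + 2 * \sum_(i < k) u i 0 * v i 0 + \sum_(i < k) v i 0 ^+ 2.
  by rewrite mulr_sumr -!big_split /=; apply: eq_bigr => i _; rewrite !mxE; ring.
by rewrite -!norm2_sqr; have := sum_mul_le_norm2 u v; nra.
Qed.

Lemma norm2Z (t : R) v : norm2 (t *: v) = `|t| * norm2 v.
Proof.
rewrite /norm2 -sqrtr_sqr -sqrtrM ?sqr_ge0 //; congr Num.sqrt.
by rewrite mulr_sumr; apply: eq_bigr => i _; rewrite !mxE exprMn.
Qed.

Lemma norm2N v : norm2 (- v) = norm2 v.
Proof. by rewrite -scaleN1r norm2Z normrN normr1 mul1r. Qed.

Lemma norm2B u v : norm2 (u - v) <= norm2 u + norm2 v.
Proof. by rewrite -(norm2N v) norm2D. Qed.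

Lemma norm2_sum n (w : 'I_n -> 'cV[R]_k) :
  norm2 (\sum_(j < n) w j) <= \sum_(j < n) norm2 (w j).
Proof.
apply: (big_ind2 (fun x y => norm2 x <= y)); first by rewrite norm2_0.
  by move=> x1 x2 y1 y2 h1 h2; apply: le_trans (norm2D _ _) (lerD h1 h2).
by [].
Qed.

End EuclideanNorm.

Section ColumnNorm.
Variables (R : realType) (m d : nat).
Implicit Types M : 'M[R]_(m, d).

Lemma norm12_ge0 M : 0 <= norm12 M.
Proof.
apply: (big_ind (fun x => 0 <= x)) => //; last by move=> j _; exact: norm2_ge0.
by move=> x y x0 y0; rewrite le_max x0.
Qed.

Lemma norm2_col_le_norm12 M j : norm2 (col j M) <= norm12 M.
Proof. exact: (le_bigmax 0 (fun j => norm2 (col j M)) j). Qed.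

Lemma norm12Z (t : R) M : 0 <= t -> norm12 (t *: M) <= t * norm12 M.
Proof.
move=> t0; apply: bigmax_le => [|j _]; first by rewrite mulr_ge0 ?norm12_ge0.
have -> : col j (t *: M) = t *: col j M by apply/matrixP => i l; rewrite !mxE.
by rewrite norm2Z ger0_norm // ler_wpM2l // norm2_col_le_norm12.
Qed.

Lemma norm12N M : norm12 (- M) = norm12 M.
Proof.
apply: eq_bigr => j _.
have -> : col j (- M) = - col j M by apply/matrixP => i l; rewrite !mxE.
by rewrite norm2N.
Qed.

Lemma norm2_mulmx_le M (a : 'cV[R]_d) :
  norm2 (M *m a) <= norm12 M * \sum_(j < d) `|a j 0|.
Proof.
have -> : M *m a = \sum_(j < d) a j 0 *: col j M.
  apply/matrixP => i l; rewrite !mxE summxE; apply: eq_bigr => j _.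
  by rewrite !mxE (ord1 l) mulrC.
apply: le_trans (norm2_sum _) _; rewrite mulr_sumr; apply: ler_sum => j _.
by rewrite norm2Z mulrC ler_wpM2r // norm2_col_le_norm12.
Qed.

End ColumnNorm.

Section PowerSums.
Variable R : realType.

Lemma powR_inv (x r : R) : 0 < x -> (x^-1) `^ r = (x `^ r)^-1.
Proof. by move=> x0; rewrite -powR_inv1 ?ltW // -powRrM mulN1r powRN. Qed.

(* Young's inequality [t * 1 <= t^p / p + 1^p' / p'] for the conjugate
   exponent [p'] of [p]. *)
Lemma young1 (t p : R) : 0 <= t -> 1 <= p -> t <= t `^ p / p + (1 - p^-1).
Proof.
move=> t0 p1; have [->|pn1] := eqVneq p 1.
  by rewrite powRr1 // invr1 mulr1 subrr addr0.
have p1' : 1 < p by rewrite lt_neqAle eq_sym pn1.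
have p0 : 0 < p by apply: lt_trans p1'.
have r0 : 0 < (1 - p^-1)^-1 by rewrite invr_gt0 subr_gt0 invf_lt1.
have := @conjugate_powR R t 1 p (1 - p^-1)^-1 t0 ler01 p0 r0.
rewrite invrK mulr1 powR1 mul1r; apply; ring.
Qed.

Definition l1_lp_const (d : nat) (p : R) : R := d%:R `^ Num.max (1 - p^-1) 0.

Lemma l1_lp_const_ge0 d p : 0 <= l1_lp_const d p.
Proof. exact: powR_ge0. Qed.

Variables (d : nat) (p : R) (b : 'I_d -> R).
Hypotheses (p0 : 0 < p) (b0 : forall j, 0 <= b j).

Local Notation T := (\sum_(j < d) b j `^ p).
Local Notation S := (T `^ p^-1).

Lemma le_lp_sum j : b j <= S.
Proof.
have -> : b j = (b j `^ p) `^ p^-1 by rewrite -powRrM mulfV ?gt_eqF // powRr1.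
have T0 : 0 <= T by apply: sumr_ge0 => i _; exact: powR_ge0.
apply: ge0_ler_powR; rewrite ?nnegrE ?invr_ge0 ?powR_ge0 ?(ltW p0) //.
by rewrite (bigD1 j) //= lerDl; apply: sumr_ge0 => i _; exact: powR_ge0.
Qed.

Lemma lp_sum_powR : S `^ p = T.
Proof.
by rewrite -powRrM mulVf ?gt_eqF // powRr1 // sumr_ge0 // => j _; exact: powR_ge0.
Qed.

Lemma sum_powR_scale c : 0 <= c -> \sum_(j < d) (b j * c) `^ p = T * c `^ p.
Proof. by move=> c0; rewrite mulr_suml; apply: eq_bigr => j _; rewrite powRM. Qed.

Lemma sum_eq0_of_lp_sum_eq0 : S = 0 -> \sum_(j < d) b j = 0.
Proof.
by move=> S0; apply: big1 => j _; apply/eqP; rewrite eq_le b0 andbT -S0 le_lp_sum.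
Qed.

(* For [p <= 1] the normalized entries [b j / S] lie in [0, 1], where
   [t <= t^p]. *)
Lemma sum_le_lp_sum_le1 : p <= 1 -> \sum_(j < d) b j <= S.
Proof.
move=> p1; have [S0|S0] := eqVneq S 0.
  by rewrite sum_eq0_of_lp_sum_eq0 // S0.
have Sgt0 : 0 < S by rewrite lt0r S0 powR_ge0.
rewrite -[leRHS]mul1r -ler_pdivrMr // mulr_suml.
apply: (@le_trans _ _ (\sum_(j < d) (b j * S^-1) `^ p)).
  apply: ler_sum => j _; have [->|bj0] := eqVneq (b j) 0.
    by rewrite mul0r powR_ge0.
  have bj_gt0 : 0 < b j by rewrite lt0r bj0 b0.
  apply: ger1_powR => //; rewrite divr_gt0 //=.
  by rewrite ler_pdivrMr // mul1r le_lp_sum.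
have Tgt0 : 0 < T by rewrite -lp_sum_powR powR_gt0.
by rewrite sum_powR_scale ?invr_ge0 ?(ltW Sgt0) // powR_inv // lp_sum_powR mulfV ?gt_eqF.
Qed.

(* For [p >= 1] apply Young's inequality to [b j * c] with [c := d^(1/p) / S],
   chosen so that [sum_j (b j * c)^p = d]. *)
Lemma sum_le_lp_sum_ge1 : 1 <= p -> \sum_(j < d) b j <= d%:R `^ (1 - p^-1) * S.
Proof.
move=> p1; have [S0|S0] := eqVneq S 0.
  by rewrite sum_eq0_of_lp_sum_eq0 // S0 mulr0.
have Sgt0 : 0 < S by rewrite lt0r S0 powR_ge0.
have Tgt0 : 0 < T by rewrite -lp_sum_powR powR_gt0.
have d0 : 0 < d%:R :> R.
  case: (posnP d) => [dz|]; last by rewrite ltr0n.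
  by move: Tgt0; rewrite big1 ?ltxx // => j; have := ltn_ord j; rewrite {2}dz.
set K := d%:R `^ p^-1.
have K0 : 0 < K by rewrite powR_gt0.
have Kp : K `^ p = d%:R by rewrite -powRrM mulVf ?gt_eqF // powRr1 // ltW d0.
set c := K / S.
have c0 : 0 < c by rewrite divr_gt0.
have cp : c `^ p = d%:R / T.
  by rewrite powRM ?invr_ge0 ?(ltW K0) ?(ltW Sgt0) // powR_inv // Kp lp_sum_powR.
have bc : \sum_(j < d) b j * c <= d%:R.
  apply: (@le_trans _ _ (\sum_(j < d) ((b j * c) `^ p / p + (1 - p^-1)))).
    by apply: ler_sum => j _; apply: young1 => //; rewrite mulr_ge0 ?b0 ?(ltW c0).
  rewrite big_split /= -mulr_suml sum_powR_scale ?(ltW c0) // cp sumr_const card_ord.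
  rewrite mulrCA mulfV ?gt_eqF // mulr1 -[(1 - p^-1) *+ d]mulr_natr.
  by rewrite [leLHS](_ : _ = d%:R) //; ring.
rewrite -mulr_suml in bc.
rewrite powRB ?(gt_eqF d0) ?implybT // powRr1 ?(ltW d0) // -/K.
rewrite -(@ler_pM2r _ c) // (le_trans bc) // [leRHS](_ : _ = d%:R) //.
by rewrite /c; field; rewrite !gt_eqF.
Qed.

Lemma sum_le_lp_sum : \sum_(j < d) b j <= l1_lp_const d p * S.
Proof.
rewrite /l1_lp_const; have [p1|p1] := leP p 1.
  have -> : Num.max (1 - p^-1) 0 = 0 by apply/max_idPr; rewrite subr_le0 invf_ge1.
  by rewrite powRr0 mul1r sum_le_lp_sum_le1.
have -> : Num.max (1 - p^-1) 0 = 1 - p^-1.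
  by apply/max_idPl; rewrite subr_ge0 invf_le1 // ltW.
exact/sum_le_lp_sum_ge1/ltW.
Qed.

End PowerSums.

Section SparseCoding.
Local Open Scope classical_set_scope.
Variables (R : realType) (m d : nat) (p q lam : R).
Hypotheses (hp : 0 < p) (hq : 0 < q) (hlam : 0 < lam).

Lemma greg_ge0 (a : 'cV[R]_d) : 0 <= greg p q lam a.
Proof. exact: powR_ge0. Qed.

Lemma greg0 : greg p q lam (0 : 'cV[R]_d) = 0.
Proof.
rewrite /greg /lpnorm scaler0 big1 => [|i _].
  by rewrite powR0 ?invr_eq0 ?gt_eqF // powR0 // gt_eqF.
by rewrite mxE normr0 powR0 // gt_eqF.
Qed.

Lemma l1_le_greg (a : 'cV[R]_d) s : greg p q lam a <= s ->
  \sum_(j < d) `|a j 0| <= lam * l1_lp_const d p * s `^ q^-1.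
Proof.
move=> ga_s; set b := lam^-1 *: a.
have -> : \sum_(j < d) `|a j 0| = lam * \sum_(j < d) `|b j 0|.
  rewrite mulr_sumr; apply: eq_bigr => j _.
  by rewrite mxE normrM gtr0_norm ?invr_gt0 // mulrA mulfV ?gt_eqF ?mul1r.
rewrite -mulrA ler_wpM2l ?(ltW hlam) //.
apply: le_trans (sum_le_lp_sum hp (fun j => normr_ge0 (b j 0))) _.
rewrite ler_wpM2l ?l1_lp_const_ge0 // -/(lpnorm p b).
have -> : lpnorm p b = greg p q lam a `^ q^-1.
  by rewrite /greg -powRrM mulfV ?gt_eqF ?powRr1 ?powR_ge0.
have s0 : 0 <= s := le_trans (greg_ge0 a) ga_s.
by apply: ge0_ler_powR; rewrite ?nnegrE ?invr_ge0 ?(ltW hq) ?greg_ge0.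
Qed.

Definition sc_obj (x : 'cV[R]_m) (D : 'M[R]_(m, d)) (a : 'cV[R]_d) : R :=
  2^-1 * norm2 (x - D *m a) ^+ 2 + greg p q lam a.

Definition sc_val (x : 'cV[R]_m) (D : 'M[R]_(m, d)) : R :=
  inf [set sc_obj x D a | a in [set: 'cV[R]_d]].

Definition sc_radius (x : 'cV[R]_m) : R :=
  lam * l1_lp_const d p * (2^-1 * norm2 x ^+ 2) `^ q^-1.

Lemma sc_obj_ge0 x D a : 0 <= sc_obj x D a.
Proof. by rewrite addr_ge0 ?greg_ge0 // mulr_ge0 ?sqr_ge0 // invr_ge0. Qed.

Lemma sc_val_le x D a : sc_val x D <= sc_obj x D a.
Proof.
apply: ge_inf; last by exists a.
by exists 0 => y [b _ <-]; exact: sc_obj_ge0.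
Qed.

Lemma sc_obj0 x D : sc_obj x D 0 = 2^-1 * norm2 x ^+ 2.
Proof. by rewrite /sc_obj mulmx0 subr0 greg0 addr0. Qed.

Lemma sc_radius_ge0 x : 0 <= sc_radius x.
Proof. by rewrite !mulr_ge0 ?powR_ge0 ?l1_lp_const_ge0 ?(ltW hlam). Qed.

Section CompetitiveCode.
Variables (x : 'cV[R]_m) (D : 'M[R]_(m, d)) (a : 'cV[R]_d).
Hypothesis a_competitive : sc_obj x D a <= sc_obj x D 0.

Lemma competitive_residual_le : norm2 (x - D *m a) <= norm2 x.
Proof.
rewrite -(@ler_pXn2r _ 2) ?nnegrE ?norm2_ge0 //.
by move: a_competitive; rewrite sc_obj0 /sc_obj; have := greg_ge0 a; lra.
Qed.

Lemma competitive_l1_le : \sum_(j < d) `|a j 0| <= sc_radius x.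
Proof.
apply: l1_le_greg; move: a_competitive; rewrite sc_obj0 /sc_obj.
by have := sqr_ge0 (norm2 (x - D *m a)); lra.
Qed.

Lemma competitive_obj_increment E : sc_obj x E a <= sc_obj x D a +
  norm2 x * sc_radius x * norm12 (E - D) + 2^-1 * (sc_radius x * norm12 (E - D)) ^+ 2.
Proof.
set rD := norm2 (x - D *m a); set h := norm2 ((E - D) *m a).
have h_le : h <= sc_radius x * norm12 (E - D).
  rewrite mulrC; apply: le_trans (norm2_mulmx_le _ _) _.
  by rewrite ler_wpM2l ?norm12_ge0 ?competitive_l1_le.
have rE_le : norm2 (x - E *m a) <= rD + h.
  have -> : x - E *m a = (x - D *m a) - (E - D) *m a.
    by rewrite mulmxBl opprB addrA subrK.
  exact: norm2B.
have rD_le : rD <= norm2 x := competitive_residual_le.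
have rD0 : 0 <= rD := norm2_ge0 _.
have h0 : 0 <= h := norm2_ge0 _.
have rE_sqr : norm2 (x - E *m a) ^+ 2 <= (rD + h) ^+ 2.
  by rewrite ler_pXn2r ?nnegrE ?norm2_ge0 ?addr_ge0.
have cross : rD * h <= norm2 x * (sc_radius x * norm12 (E - D)) by exact: ler_pM.
have h_sqr : h ^+ 2 <= (sc_radius x * norm12 (E - D)) ^+ 2.
  have c0 : 0 <= sc_radius x * norm12 (E - D).
    exact: mulr_ge0 (sc_radius_ge0 x) (norm12_ge0 _).
  by rewrite ler_pXn2r ?nnegrE.
rewrite /sc_obj -/rD -mulrA; move: rE_sqr cross h_sqr.
have -> : (rD + h) ^+ 2 = rD ^+ 2 + 2 * (rD * h) + h ^+ 2 by ring.
lra.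
Qed.

End CompetitiveCode.

Lemma sc_val_increment x D E : sc_val x E - sc_val x D <=
  norm2 x * sc_radius x * norm12 (E - D) + 2^-1 * sc_radius x ^+ 2 * norm12 (E - D) ^+ 2.
Proof.
rewrite -[X in _ <= _ + X]mulrA -exprMn.
set B := (X in _ <= X); have B0 : 0 <= B.
  have c0 := mulr_ge0 (norm2_ge0 x) (sc_radius_ge0 x).
  apply: addr_ge0; first exact: mulr_ge0 c0 (norm12_ge0 _).
  by rewrite mulr_ge0 ?sqr_ge0 ?invr_ge0.
rewrite lerBlDr -lerBlDl; apply: lb_le_inf; first by exists (sc_obj x D 0), 0.
move=> _ [a _ <-]; rewrite lerBlDl.
have [a_comp|a_bad] := leP (sc_obj x D a) (sc_obj x D 0).
  apply: le_trans (sc_val_le _ _ a) _.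
  by rewrite addrC /B addrA competitive_obj_increment.
(* Codes worse than [a = 0] are dominated by the value at [0] for [E]. *)
apply: le_trans (sc_val_le x E 0) _; rewrite (sc_obj0 x E) -(sc_obj0 x D).
by rewrite -[leLHS]add0r; exact: lerD B0 (ltW a_bad).
Qed.

End SparseCoding.

Section Subdivision.
Variables (R : realType) (V : lmodType R) (nrm : V -> R) (phi : V -> R) (A B : R).
Hypotheses (nrm_ge0 : forall v, 0 <= nrm v)
  (nrmZ : forall t v, 0 <= t -> nrm (t *: v) <= t * nrm v)
  (A0 : 0 <= A) (B0 : 0 <= B)
  (phi_increment : forall u v, phi v - phi u <= A * nrm (v - u) + B * nrm (v - u) ^+ 2).

Lemma increment_le_subdivided u v k : (0 < k)%N ->
  phi v - phi u <= A * nrm (v - u) + B * nrm (v - u) ^+ 2 / k%:R.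
Proof.
move=> k0; set del := nrm (v - u); have k0' : 0 < k%:R :> R by rewrite ltr0n.
pose P j := u + (j%:R / k%:R) *: (v - u).
have -> : phi v - phi u = \sum_(0 <= j < k) (phi (P j.+1) - phi (P j)).
  rewrite telescope_sumr // /P mul0r scale0r addr0 mulfV ?gt_eqF // scale1r.
  by rewrite [u + _]addrC subrK.
have step j : phi (P j.+1) - phi (P j) <= A * (del / k%:R) + B * (del / k%:R) ^+ 2.
  have stepE : P j.+1 - P j = k%:R^-1 *: (v - u).
    rewrite /P opprD addrACA subrr add0r -scalerBl -mulrBl.
    by rewrite -natrB ?leqnSn // subSnn mul1r.
  have step_le : nrm (P j.+1 - P j) <= del / k%:R.
    by rewrite stepE mulrC nrmZ // invr_ge0 ltW.
  apply: le_trans (phi_increment _ _) _; apply: lerD; first by rewrite ler_wpM2l.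
  by rewrite ler_wpM2l // ler_pXn2r ?nnegrE // divr_ge0 ?nrm_ge0 ?(ltW k0').
apply: le_trans (ler_sum _ (fun j _ => step j)) _.
rewrite sumr_const_nat subn0 -[_ *+ k]mulr_natr.
rewrite [leLHS](_ : _ = A * del + B * del ^+ 2 / k%:R) //.
by field; rewrite gt_eqF.
Qed.

Lemma increment_le_lipschitz u v : phi v - phi u <= A * nrm (v - u).
Proof.
apply/ler_addgt0Pr => e e0; set c := B * nrm (v - u) ^+ 2.
have ce0 : 0 <= c / e by rewrite divr_ge0 ?mulr_ge0 ?sqr_ge0 // ltW.
set k := Num.Def.archi_bound (c / e).
have ce_lt : c / e < k%:R := archi_boundP ce0.
have k0 : (0 < k)%N by rewrite -(ltr0n R) (le_lt_trans ce0).
apply: le_trans (increment_le_subdivided u v k0) _; rewrite lerD2l.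
by rewrite ler_pdivrMr ?ltr0n // [e * _]mulrC -ler_pdivrMr // ltW.
Qed.

End Subdivision.

Theorem lemma1 (R : realType) (m d n : nat) (p q lam : R)
  (hm : (1 <= m)%N) (hd : (1 <= d)%N) (hn : (1 <= n)%N)
  (hp : 0 < p) (hq : 0 < q) (hlam : 0 < lam)
  (X : 'M[R]_(m, n)) (D D' : 'M[R]_(m, d)) :
  unit_cols D -> unit_cols D' ->
  `|FX p q lam X D' - FX p q lam X D| <= LX d p q lam X * norm12 (D' - D).
Proof.
move=> _ _; set L := LX d p q lam X.
set B := n%:R^-1 * \sum_(i < n) 2^-1 * sc_radius d p q lam (col i X) ^+ 2.
have LE : L = n%:R^-1 * \sum_(i < n) norm2 (col i X) * sc_radius d p q lam (col i X).
  by congr (_ * _); apply: eq_bigr => i _; rewrite /sc_radius !mulrA.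
have FXE (E : 'M[R]_(m, d)) :
  FX p q lam X E = n%:R^-1 * \sum_(i < n) sc_val p q lam (col i X) E by [].
have n0 : 0 <= n%:R^-1 :> R by rewrite invr_ge0.
have L0 : 0 <= L.
  rewrite LE mulr_ge0 // sumr_ge0 // => i _.
  by rewrite mulr_ge0 ?norm2_ge0 ?sc_radius_ge0.
have B0 : 0 <= B by rewrite mulr_ge0 // sumr_ge0 // => i _; rewrite mulr_ge0 ?sqr_ge0.
have FX_increment (E1 E2 : 'M[R]_(m, d)) : FX p q lam X E2 - FX p q lam X E1 <=
    L * norm12 (E2 - E1) + B * norm12 (E2 - E1) ^+ 2.
  rewrite !FXE LE /B -mulrBr -sumrB -!mulrA -mulrDr ler_wpM2l //.
  rewrite !mulr_suml -big_split /= ler_sum // => i _.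
  exact: sc_val_increment.
have lip E1 E2 := increment_le_lipschitz (@norm12_ge0 R m d) (@norm12Z R m d)
  L0 B0 FX_increment E1 E2.
have := lip D D'; have := lip D' D; rewrite -[D - D']opprB norm12N ler_norml.
by move=> h1 h2; apply/andP; split; lra.
Qed.
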